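(* The 240 minimal vectors of the $E_8$ lattice can be partitioned into 15 coordinate frames. Consequently $E_8$ is the intersection of 15 pairwise congruent lattices in $\mathbb{R}^8$, each similar to $\mathbb{Z}^8$. *)

From HB Require Import structures.
From mathcomp Require Import all_boot all_order all_algebra.
From mathcomp Require Import reals.
Set Implicit Arguments. Unset Strict Implicit. Unset Printing Implicit Defensive.
Import Order.TTheory GRing.Theory Num.Theory.
Local Open Scope ring_scope.

Notation vec8 R := 'rV[R]_8.

Definition dot8 (R : realType) (u v : vec8 R) : R := \sum_(i < 8) u 0 i * v 0 i.

Definition E8 (R : realType) (x : vec8 R) : Prop :=
  ((forall i, x 0 i \is a Num.int) \/ (forall i, x 0 i - 2^-1 \is a Num.int))
  /\ (\sum_(i < 8) x 0 i) / 2 \is a Num.int.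

Definition E8_minimal (R : realType) (x : vec8 R) : Prop :=
  E8 x /\ x != 0 /\ forall y, E8 y -> y != 0 -> dot8 x x <= dot8 y y.

Definition coordinate_frame (R : realType) (F : vec8 R -> Prop) : Prop :=
  exists v : 'I_8 -> vec8 R,
    (forall i, v i != 0) /\
    (forall i j, i != j -> dot8 (v i) (v j) = 0) /\
    (forall i j, dot8 (v i) (v i) = dot8 (v j) (v j)) /\
    (forall x, F x <-> exists i, x = v i \/ x = - v i).

Definition lattice_of (R : realType) (b : 'I_8 -> vec8 R) (x : vec8 R) : Prop :=
  exists z : 'I_8 -> int, x = \sum_(i < 8) (z i)%:~R *: b i.

(* L is similar to Z^8: image of Z^8 under a similarity, i.e. L has a basis
   of pairwise orthogonal vectors all of the same positive norm c. *)
Definition similar_to_Z8 (R : realType) (L : vec8 R -> Prop) : Prop :=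
  exists (b : 'I_8 -> vec8 R) (c : R), 0 < c /\
    (forall i j, dot8 (b i) (b j) = if i == j then c else 0) /\
    (forall x, L x <-> lattice_of b x).

(* Congruent lattices: L2 is the image of L1 under an orthogonal map
   (for lattices, which contain 0, any isometry reduces to a linear one). *)
Definition congruent (R : realType) (L1 L2 : vec8 R -> Prop) : Prop :=
  exists Q : 'M[R]_8, Q *m Q^T = 1%:M /\
    (forall y, L2 y <-> exists x, L1 x /\ y = x *m Q).

From HB Require Import structures.
From mathcomp Require Import all_boot all_order all_algebra.
From mathcomp Require Import reals.
From mathcomp Require Import ring lra zify.
Set Implicit Arguments. Unset Strict Implicit. Unset Printing Implicit Defensive.
Import Order.TTheory GRing.Theory Num.Theory.
Local Open Scope ring_scope.

(* The 240 minimal vectors of E8 are the ±e_i ± e_j and the (±1/2, ..., ±1/2)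
   with an even number of minus signs.  Identify the coordinates {0..7} with
   F_2^3.  The integral minimal vectors split into the 7 frames
   {±e_i ± e_(i+a)}, one for each nonzero a in F_2^3; the half-integral ones
   split into the 8 cosets of the first order Reed-Muller code (the 16 signed
   rows of the Sylvester-Hadamard matrix) in the even-weight code, with coset
   representatives e_0 + e_c.  A lattice vector of norm at most 2 has doubled
   coordinates in {0,±2} or {±1}, so that these claims reduce to a finite
   computation.

   If v_1, ..., v_8 is an orthogonal frame of norm c, the lattice spanned by
   the v_i / c is {x | x.v_i in Z for all i}, a scaled copy of Z^8, and two
   such lattices are congruent through the orthogonal map sending one frame to
   the other.  The intersection of the 15 lattices is thus
   {x | x.r in Z for every minimal vector r}, which is E8: E8 is integral, and
   conversely x.(e_0 ± e_j) in Z and x.(1/2, ..., 1/2) in Z force x into E8. *)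

Section Dot8.
Variable R : realType.
Implicit Types (u v w : vec8 R) (a : R).

Lemma dot8C u v : dot8 u v = dot8 v u.
Proof. by apply: eq_bigr => i _; rewrite mulrC. Qed.

Lemma dot8_mxE u v : dot8 u v = (u *m v^T) 0 0.
Proof. by rewrite !mxE; apply: eq_bigr => j _; rewrite !mxE. Qed.

Lemma dot8Dl u v w : dot8 (u + v) w = dot8 u w + dot8 v w.
Proof. by rewrite /dot8 -big_split; apply: eq_bigr => i _; rewrite mxE mulrDl. Qed.

Lemma dot8Zl a u v : dot8 (a *: u) v = a * dot8 u v.
Proof. by rewrite /dot8 mulr_sumr; apply: eq_bigr => i _; rewrite mxE mulrA. Qed.

Lemma dot8Nl u v : dot8 (- u) v = - dot8 u v.
Proof. by rewrite -scaleN1r dot8Zl mulN1r. Qed.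

Lemma dot80l v : dot8 0 v = 0.
Proof. by rewrite -(scale0r 0) dot8Zl mul0r. Qed.

Lemma dot8Dr u v w : dot8 u (v + w) = dot8 u v + dot8 u w.
Proof. by rewrite !(dot8C u) dot8Dl. Qed.

Lemma dot8Zr a u v : dot8 u (a *: v) = a * dot8 u v.
Proof. by rewrite !(dot8C u) dot8Zl. Qed.

Lemma dot8Nr u v : dot8 u (- v) = - dot8 u v.
Proof. by rewrite !(dot8C u) dot8Nl. Qed.

Lemma dot8_suml (I : finType) (F : I -> vec8 R) v :
  dot8 (\sum_i F i) v = \sum_i dot8 (F i) v.
Proof.
rewrite /dot8 exchange_big; apply: eq_bigr => j _.
by rewrite summxE mulr_suml.
Qed.

Lemma dot8_delta v j : dot8 v (delta_mx 0 j) = v 0 j.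
Proof.
rewrite /dot8 (bigD1 j) //= big1 ?addr0 => [|i ij]; rewrite mxE eqxx /=.
  by rewrite eqxx mulr1.
by rewrite (negbTE ij) mulr0.
Qed.

End Dot8.

Lemma mulmx_tr_scalar (F : fieldType) n (A : 'M[F]_n) (c : F) :
  c != 0 -> A *m A^T = c%:M -> A^T *m A = c%:M.
Proof.
move=> c0 AAt; have /mulmx1C : A *m (c^-1 *: A^T) = 1%:M.
  by rewrite -scalemxAr AAt scale_scalar_mx mulVf.
rewrite -scalemxAl => /(congr1 (fun M => c *: M)).
by rewrite scalerA mulfV // scale1r => ->; rewrite scale_scalar_mx mulr1.
Qed.

Definition orthogonal_frame (R : realType) (c : R) (v : 'I_8 -> vec8 R) : Prop :=
  forall i j, dot8 (v i) (v j) = if i == j then c else 0.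

Lemma congruent_lattice_of (R : realType) (b b' : 'I_8 -> vec8 R) (Q : 'M[R]_8) :
  Q *m Q^T = 1%:M -> (forall i, b i *m Q = b' i) ->
  congruent (lattice_of b) (lattice_of b').
Proof.
move=> Qo bQ; exists Q; split=> // y.
have mapQ z : (\sum_i (z i)%:~R *: b i) *m Q = \sum_i (z i)%:~R *: b' i.
  by rewrite mulmx_suml; apply: eq_bigr => i _; rewrite -scalemxAl bQ.
split=> [[z ->]|[x [[z ->] ->]]]; last by exists z.
by exists (\sum_i (z i)%:~R *: b i); split; [exists z | rewrite mapQ].
Qed.

Section FrameLattice.
Variables (R : realType) (c : R).
Hypothesis c_gt0 : 0 < c.

Let c_neq0 : c != 0. Proof. by rewrite gt_eqF. Qed.

Definition frame_mx (v : 'I_8 -> vec8 R) : 'M[R]_8 := \matrix_(i, j) v i 0 j.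

Lemma row_frame_mx v i : row i (frame_mx v) = v i.
Proof. by apply/rowP => j; rewrite !mxE. Qed.

Variable v : 'I_8 -> vec8 R.
Hypothesis v_frame : orthogonal_frame c v.

Lemma frame_mx_mul_tr : frame_mx v *m (frame_mx v)^T = c%:M.
Proof.
apply/matrixP => i j; rewrite !mxE mulrb -v_frame.
by apply: eq_bigr => l _; rewrite !mxE.
Qed.

Lemma frame_mx_tr_mul : (frame_mx v)^T *m frame_mx v = c%:M.
Proof. exact: mulmx_tr_scalar frame_mx_mul_tr. Qed.

Lemma frame_expansion x : x = \sum_i (dot8 x (v i) / c) *: v i.
Proof.
have -> : \sum_i (dot8 x (v i) / c) *: v i = c^-1 *: (x *m (frame_mx v)^T *m frame_mx v).
  rewrite mulmx_sum_row scaler_sumr; apply: eq_bigr => i _.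
  rewrite row_frame_mx scalerA mulrC dot8_mxE !mxE.
  by congr (_ * _ *: _); apply: eq_bigr => l _; rewrite !mxE.
by rewrite -mulmxA frame_mx_tr_mul mul_mx_scalar scalerA mulVf // scale1r.
Qed.

Lemma lattice_of_frameP x :
  lattice_of (fun i => c^-1 *: v i) x <-> forall i, dot8 x (v i) \is a Num.int.
Proof.
split=> [[z ->] i|x_int].
  rewrite dot8_suml (bigD1 i) //= big1 ?addr0 => [|j ji].
    by rewrite !dot8Zl v_frame eqxx mulrA mulfVK // intr_int.
  by rewrite !dot8Zl v_frame (negbTE ji) !mulr0.
exists (fun i => Num.floor (dot8 x (v i))); rewrite {1}(frame_expansion x).
by apply: eq_bigr => i _; rewrite floorK // scalerA mulrC.
Qed.

Lemma similar_to_Z8_frame : similar_to_Z8 (lattice_of (fun i => c^-1 *: v i)).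
Proof.
exists (fun i => c^-1 *: v i), c^-1; split; first by rewrite invr_gt0.
split=> // i j; rewrite dot8Zl dot8Zr v_frame.
by case: eqP => _; rewrite ?mulr0 // mulVf ?mulr1.
Qed.

End FrameLattice.

Lemma frame_change (R : realType) (c : R) (v w : 'I_8 -> vec8 R) : 0 < c ->
  orthogonal_frame c v -> orthogonal_frame c w ->
  exists2 Q : 'M[R]_8, Q *m Q^T = 1%:M & forall i, v i *m Q = w i.
Proof.
move=> c_gt0 v_frame w_frame; have c0 : c != 0 by rewrite gt_eqF.
exists (c^-1 *: ((frame_mx v)^T *m frame_mx w)) => [|i].
  rewrite linearZ /= trmx_mul trmxK -scalemxAl -scalemxAr scalerA.
  rewrite mulmxA -(mulmxA _ (frame_mx w)) (frame_mx_mul_tr w_frame) mul_mx_scalar.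
  rewrite -scalemxAl (frame_mx_tr_mul c_gt0 v_frame) scalerA scale_scalar_mx.
  by rewrite divfK // mulVf.
rewrite -(row_frame_mx v i) -(row_frame_mx w i) !rowE -scalemxAr !mulmxA.
rewrite -(mulmxA _ (frame_mx v)) (frame_mx_mul_tr v_frame) mul_mx_scalar -scalemxAl.
by rewrite scalerA mulVf ?scale1r.
Qed.

Lemma congruent_frame_lattices (R : realType) (c : R) (v w : 'I_8 -> vec8 R) : 0 < c ->
  orthogonal_frame c v -> orthogonal_frame c w ->
  congruent (lattice_of (fun i => c^-1 *: v i)) (lattice_of (fun i => c^-1 *: w i)).
Proof.
move=> c_gt0 v_frame w_frame; have [Q Qo vQ] := frame_change c_gt0 v_frame w_frame.
by apply: (congruent_lattice_of Qo) => i; rewrite -scalemxAl vQ.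
Qed.

Lemma intr_div_int (R : archiFieldType) (a d : int) :
  d != 0 -> ((a%:~R / d%:~R : R) \is a Num.int) = (d %| a)%Z.
Proof.
move=> d0; have d0R : (d%:~R : R) != 0 by rewrite intr_eq0.
apply/intrP/dvdzP => [[m am]|[m ->]]; last by exists m; rewrite intrM mulfK.
by exists m; apply: (@intr_inj R); rewrite intrM -am divfK.
Qed.

Lemma half_int_cases (R : archiFieldType) (y : R) :
  2 * y \is a Num.int -> y \is a Num.int \/ y - 2^-1 \is a Num.int.
Proof.
case/intrP => n yn; have -> : y = n%:~R / (2 : int)%:~R by rewrite -yn; field.
have /orP[n_even|n_odd] : (2 %| n)%Z || (2 %| n - 1)%Z by lia.
  by left; rewrite intr_div_int.
right; have -> : n%:~R / (2 : int)%:~R - 2^-1 = (n - 1)%:~R / (2 : int)%:~R :> R.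
  by rewrite intrB mulrBl div1r.
by rewrite intr_div_int.
Qed.

Section E8Integrality.
Variable R : realType.
Implicit Types (x y : vec8 R).

Definition half_ones : vec8 R := const_mx 2^-1.

Lemma dot8_half_ones x : dot8 x half_ones = (\sum_i x 0 i) / 2.
Proof. by rewrite mulr_suml; apply: eq_bigr => i _; rewrite mxE. Qed.

Lemma dot8_half_ones_self : dot8 half_ones half_ones = 2.
Proof.
rewrite dot8_half_ones (eq_bigr (fun=> 2^-1)) => [|i _]; last by rewrite mxE.
by rewrite sumr_const card_ord; field.
Qed.

Lemma E8_half_ones : E8 half_ones.
Proof.
split; first by right=> i; rewrite mxE subrr.
by rewrite -dot8_half_ones dot8_half_ones_self.
Qed.

Lemma E8N x : E8 x -> E8 (- x).
Proof.
have sumN : \sum_i (- x) 0 i = - \sum_i x 0 i.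
  by rewrite -sumrN; apply: eq_bigr => i _; rewrite mxE.
case=> [[x_int|x_half] x_sum]; split; rewrite ?sumN ?mulNr ?rpredN //.
  by left=> i; rewrite mxE rpredN.
right=> i; rewrite mxE.
have -> : - x 0 i - 2^-1 = - (x 0 i - 2^-1) - 1 by field.
by rewrite rpredB ?rpredN ?rpred1.
Qed.

Lemma E8_int_shift x : E8 x ->
  exists2 e : R, e \is a Num.int & forall i, (x - e *: half_ones) 0 i \is a Num.int.
Proof.
case=> [[x_int|x_half] _]; [exists 0 | exists 1] => // i; rewrite !mxE.
  by rewrite mul0r subr0.
by rewrite mul1r.
Qed.

Lemma dot8_int x y : (forall i, x 0 i \is a Num.int) -> (forall i, y 0 i \is a Num.int) ->
  dot8 x y \is a Num.int.
Proof. by move=> x_int y_int; apply: rpred_sum => i _; rewrite rpredM. Qed.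

Lemma E8_dot_int x y : E8 x -> E8 y -> dot8 x y \is a Num.int.
Proof.
move=> Ex Ey; have [e e_int x'_int] := E8_int_shift Ex.
have [f f_int y'_int] := E8_int_shift Ey.
have sum_int z : E8 z -> dot8 z half_ones \is a Num.int by case=> _; rewrite dot8_half_ones.
have -> : dot8 x y = dot8 (x - e *: half_ones) (y - f *: half_ones)
    + f * (dot8 x half_ones - e * dot8 half_ones half_ones) + e * dot8 y half_ones.
  rewrite !(dot8Dl, dot8Dr, dot8Nl, dot8Nr, dot8Zl, dot8Zr) (dot8C half_ones y).
  ring.
rewrite dot8_half_ones_self; apply: rpredD; first apply: rpredD.
- exact: dot8_int.
- by apply: rpredM; rewrite // rpredB ?sum_int // rpredM ?natr_int.
- by apply: rpredM; rewrite ?sum_int.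
Qed.

Lemma E8_delta_pm (j : 'I_8) (s : R) : j != 0 -> s = 1 \/ s = -1 ->
  let r := delta_mx 0 0 + s *: delta_mx 0 j in E8 r /\ dot8 r r = 2.
Proof.
move=> j0 s_pm r; have r_coord i : r 0 i = (i == 0)%:R + s * (i == j)%:R by rewrite !mxE.
have s_int : s \is a Num.int by case: s_pm => ->; rewrite ?rpredN rpred1.
split; last first.
  rewrite dot8Dr dot8Zr !dot8_delta !r_coord !eqxx (negbTE j0) eq_sym (negbTE j0).
  by case: s_pm => ->; rewrite /=; ring.
split; first by left=> i; rewrite r_coord rpredD ?rpredM ?natr_int.
rewrite -dot8_half_ones dot8C dot8Dr dot8Zr !dot8_delta !mxE -{1}[2^-1]mul1r -mulrDl.
by case: s_pm => ->; rewrite ?subrr ?mul0r ?rpred0 // divff ?rpred1 // -mulr2n pnatr_eq0.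
Qed.

Lemma E8_dual x : E8 x <-> forall r, E8 r -> dot8 r r = 2 -> dot8 x r \is a Num.int.
Proof.
split=> [Ex r Er _|x_int]; first exact: E8_dot_int.
have pm_int j s : j != 0 -> s = 1 \/ s = -1 -> x 0 0 + s * x 0 j \is a Num.int.
  move=> j0 s_pm; have [Er r2] := E8_delta_pm j0 s_pm.
  by have := x_int _ Er r2; rewrite dot8Dr dot8Zr !dot8_delta.
have add_int j : j != 0 -> x 0 0 + x 0 j \is a Num.int.
  by move=> j0; rewrite -[x 0 j]mul1r pm_int //; left.
have sub_int j : j != 0 -> x 0 0 - x 0 j \is a Num.int.
  by move=> j0; rewrite -mulN1r pm_int //; right.
split; last by rewrite -(dot8_half_ones x); exact: x_int E8_half_ones dot8_half_ones_self.
have : 2 * x 0 0 \is a Num.int.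
  have -> : 2 * x 0 0 = (x 0 0 + x 0 ord_max) + (x 0 0 - x 0 ord_max) by ring.
  by rewrite rpredD ?add_int ?sub_int.
case/half_int_cases => x0_int; [left | right] => j; have [->|j0] := eqVneq j 0 => //.
  by rewrite -[x 0 j](addKr (x 0 0)) rpredD ?rpredN ?add_int.
have -> : x 0 j - 2^-1 = (x 0 0 + x 0 j) - (x 0 0 - 2^-1) - 1 by field.
by rewrite rpredB ?rpred1 // rpredB ?add_int.
Qed.

End E8Integrality.

(* Lattice vectors are handled through their doubled coordinates, which are
   integers. *)

Definition dotz (s t : seq int) : int := \sum_(0 <= j < 8) s`_j * t`_j.

Definition sumz (s : seq int) : int := \sum_(0 <= j < 8) s`_j.

Definition E8_doubled (s : seq int) : bool :=
  (all (fun j => 2 %| s`_j)%Z (iota 0 8) || all (fun j => 2 %| s`_j - 1)%Z (iota 0 8))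
  && (4 %| sumz s)%Z.

Fixpoint allseqs (T : Type) (n : nat) (vals : seq T) : seq (seq T) :=
  if n is n'.+1 then [seq v :: s | v <- vals, s <- allseqs n' vals] else [:: [::]].

Definition small_doubled : seq (seq int) :=
  allseqs 8 [:: -2; 0; 2] ++ allseqs 8 [:: -1; 1].

(* Doubled coordinates of e_i ± e_(i xor a); the sign makes the two vectors
   supported on the pair {i, i xor a} orthogonal. *)
Definition pair_root (a i : nat) : seq int :=
  let p := Nat.lxor i a in
  mkseq (fun j => (if j == i then 2 else 0) +
                  (if j == p then (if (i < p)%N then 2 else -2) else 0)) 8.

Definition binary_dot (a j : nat) : bool :=
  odd (count (fun b => Nat.testbit a b && Nat.testbit j b) (iota 0 3)).

(* Row a of the Sylvester-Hadamard matrix with coordinates 0 and c negated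
   (for c = 0 the two negations cancel). *)
Definition sign_root (c a : nat) : seq int :=
  mkseq (fun j => (-1) ^+ ((j == 0%N) (+) (j == c) (+) binary_dot a j)) 8.

Definition frame_root (k i : nat) : seq int :=
  if (k < 7)%N then pair_root k.+1 i else sign_root (k - 7) i.

Definition is_frame_root (s : seq int) : bool :=
  has (fun k => has (fun i => (s == frame_root k i) || (s == map -%R (frame_root k i)))
    (iota 0 8)) (iota 0 15).

Lemma frame_roots_E8_orthogonal : all (fun k => all (fun i =>
    E8_doubled (frame_root k i) &&
    all (fun j => dotz (frame_root k i) (frame_root k j) == if i == j then 8 else 0)
      (iota 0 8))
  (iota 0 8)) (iota 0 15).
Proof. by rewrite /E8_doubled /sumz /dotz unlock; vm_compute. Qed.

Lemma frame_roots_disjoint : all (fun k => all (fun k' => (k == k') ||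
    all (fun i => all (fun j => (frame_root k i != frame_root k' j)
                               && (frame_root k i != map -%R (frame_root k' j)))
      (iota 0 8)) (iota 0 8))
  (iota 0 15)) (iota 0 15).
Proof. by vm_compute. Qed.

Lemma small_doubled_norm_ge8 :
  all (fun s => E8_doubled s && (s != nseq 8 0) ==> (8 <= dotz s s)) small_doubled.
Proof. by rewrite /E8_doubled /sumz /dotz unlock; vm_compute. Qed.

Lemma small_doubled_norm8_roots :
  all is_frame_root [seq s <- small_doubled | E8_doubled s & dotz s s == 8].
Proof. by rewrite /E8_doubled /sumz /dotz unlock; vm_compute. Qed.

Lemma all_iotaP (P : pred nat) n : reflect (forall i : 'I_n, P i) (all P (iota 0 n)).
Proof.
apply: (iffP allP) => [P_iota i|P_ord j]; first by apply: P_iota; rewrite mem_iota ltn_ord.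
by rewrite mem_iota => /andP[_ lt_jn]; apply: (P_ord (Ordinal lt_jn)).
Qed.

Lemma mem_allseqs (T : eqType) n (vals : seq T) s :
  size s = n -> all (mem vals) s -> s \in allseqs n vals.
Proof.
elim: n s => [|n IHn] [|v s] //= [size_s] /andP[v_val s_vals].
by apply/allpairsPdep; exists v, s; rewrite IHn.
Qed.

Lemma ler_sum_term (R : numDomainType) n (F : 'I_n -> R) (lo : R) j :
  (forall i, lo <= F i) -> F j + n.-1%:R * lo <= \sum_i F i.
Proof.
move=> F_lo; rewrite (bigD1 j) //= lerD2l.
have -> : n.-1%:R * lo = \sum_(i | i != j) lo by rewrite sumr_const cardC1 card_ord mulr_natl.
by apply: ler_sum.
Qed.

Lemma small_even_int (a : int) : (2 %| a)%Z -> a * a <= 8 -> a \in [:: -2; 0; 2].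
Proof. by move=> a_even a_le; have [->|[->|->]] : a = -2 \/ a = 0 \/ a = 2 by nia. Qed.

Lemma small_odd_int (a : int) : (2 %| a - 1)%Z -> a * a <= 1 -> a \in [:: -1; 1].
Proof. by move=> a_odd a_le; have [->|->] : a = -1 \/ a = 1 by nia. Qed.

Lemma size_frame_root k i : size (frame_root k i) = 8%N.
Proof. by rewrite /frame_root; case: ifP => _; rewrite size_mkseq. Qed.

Lemma frame_root_spec (k : 'I_15) (i : 'I_8) : E8_doubled (frame_root k i) /\
  forall j : 'I_8, dotz (frame_root k i) (frame_root k j) = if i == j then 8 else 0.
Proof.
have /all_iotaP/(_ k)/all_iotaP/(_ i)/andP[E8_ki /all_iotaP dot_ki] :=
  frame_roots_E8_orthogonal.
by split=> // j; apply/eqP/dot_ki.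
Qed.

Section DoubledCoordinates.
Variable R : realType.
Implicit Types (s t : seq int) (x : vec8 R).

Definition halfv s : vec8 R := \row_(j < 8) ((s`_j)%:~R / 2).

Lemma halfv_coord s i : halfv s 0 i = (s`_i)%:~R / (2 : int)%:~R.
Proof. by rewrite mxE. Qed.

Lemma dot8_halfv s t : dot8 (halfv s) (halfv t) = (dotz s t)%:~R / 4.
Proof.
rewrite /dot8 /dotz big_mkord rmorph_sum mulr_suml; apply: eq_bigr => j _.
by rewrite !mxE rmorphM /=; field.
Qed.

Lemma E8_halfvP s : E8 (halfv s) <-> E8_doubled s.
Proof.
have sum_s : (\sum_i halfv s 0 i) / 2 = (sumz s)%:~R / (4 : int)%:~R.
  rewrite /sumz big_mkord rmorph_sum !mulr_suml; apply: eq_bigr => j _.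
  by rewrite mxE; field.
have half_s i : halfv s 0 i - 2^-1 = (s`_i - 1)%:~R / (2 : int)%:~R.
  by rewrite mxE intrB mulrBl div1r.
rewrite /E8 /E8_doubled sum_s intr_div_int //.
split=> [[[s_int|s_half] ->]|/andP[/orP[/all_iotaP s_even|/all_iotaP s_odd] ->]].
- by rewrite andbT; apply/orP; left; apply/all_iotaP => i; rewrite -(intr_div_int R) -?halfv_coord.
- by rewrite andbT; apply/orP; right; apply/all_iotaP => i; rewrite -(intr_div_int R) -?half_s.
- by split=> //; left=> i; rewrite halfv_coord intr_div_int.
- by split=> //; right=> i; rewrite half_s intr_div_int.
Qed.

Lemma halfvN s : halfv (map -%R s) = - halfv s.
Proof.
apply/rowP => j; rewrite !mxE -mulNr -rmorphN.
have [lt_js|le_sj] := ltnP j (size s); first by rewrite (nth_map 0).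
by rewrite !nth_default ?size_map.
Qed.

Lemma halfv_nseq0 : halfv (nseq 8 0) = 0.
Proof. by apply/rowP => j; rewrite !mxE nth_nseq ltn_ord mul0r. Qed.

Lemma halfv_inj s t : size s = 8%N -> size t = 8%N -> halfv s = halfv t -> s = t.
Proof.
move=> size_s size_t st; apply: (eq_from_nth (x0 := 0)) => [|j]; first by rewrite size_s.
rewrite size_s => lt_j8; have /rowP/(_ (Ordinal lt_j8)) := st.
by rewrite !mxE => /(mulIf _)/intr_inj; apply; rewrite invr_eq0 pnatr_eq0.
Qed.

Lemma E8_small x : E8 x -> dot8 x x <= 2 -> exists2 s, s \in small_doubled & x = halfv s.
Proof.
move=> Ex x_le2; have x2_int j : 2 * x 0 j \is a Num.int.
  case: Ex => [[x_int|x_half] _]; first by rewrite rpredM ?natr_int.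
  have -> : 2 * x 0 j = 2 * (x 0 j - 2^-1) + 1 by field.
  by rewrite rpredD ?rpredM ?natr_int ?rpred1.
pose s := mkseq (fun j => Num.floor (2 * x 0 (inord j))) 8.
have x_s : x = halfv s.
  by apply/rowP => j; rewrite mxE nth_mkseq // inord_val floorK //; field.
have /andP[parity _] : E8_doubled s by rewrite -E8_halfvP -x_s.
have norm_s : dotz s s <= 8.
  by rewrite -(ler_int R); move: x_le2; rewrite x_s dot8_halfv; lra.
rewrite /dotz big_mkord in norm_s.
have term_le (lo : int) (j : 'I_8) : (forall i : 'I_8, lo <= s`_i * s`_i) ->
    s`_j * s`_j <= 8 - 7 * lo.
  move=> s_lo; have := ler_sum_term j s_lo.
  by rewrite -[8.-1%:R]/(7 : int) => /le_trans/(_ norm_s); lia.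
exists s => //; rewrite mem_cat; apply/orP.
case/orP: parity => [/all_iotaP s_even|/all_iotaP s_odd]; [left|right];
  apply: mem_allseqs; rewrite ?size_mkseq //; apply/(all_nthP 0) => j;
  rewrite size_mkseq => lt_j8.
- apply: small_even_int (s_even (Ordinal lt_j8)) _.
  by have := term_le 0 (Ordinal lt_j8); rewrite mulr0 subr0; apply=> i; nia.
- apply: small_odd_int (s_odd (Ordinal lt_j8)) _.
  by have := term_le 1 (Ordinal lt_j8); apply=> i; have := s_odd i; nia.
Qed.

End DoubledCoordinates.

Section RootFrames.
Variable R : realType.
Implicit Types x y : vec8 R.

Definition frame_vec (k : 'I_15) (i : 'I_8) : vec8 R := halfv R (frame_root k i).

Definition frame_set (k : 'I_15) x : Prop := exists i, x = frame_vec k i \/ x = - frame_vec k i.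

Definition frame_lattice (k : 'I_15) : vec8 R -> Prop :=
  lattice_of (fun i => 2^-1 *: frame_vec k i).

Lemma E8_frame_vec k i : E8 (frame_vec k i).
Proof. by rewrite E8_halfvP; case: (frame_root_spec k i). Qed.

Lemma orthogonal_frame_vec k : orthogonal_frame 2 (frame_vec k).
Proof.
move=> i j; rewrite dot8_halfv; case: (frame_root_spec k i) => _ ->.
by case: eqP => _; rewrite ?mul0r //; field.
Qed.

Lemma norm_frame_vec k i : dot8 (frame_vec k i) (frame_vec k i) = 2.
Proof. by rewrite orthogonal_frame_vec eqxx. Qed.

Lemma frame_vec_neq0 k i : frame_vec k i != 0.
Proof.
by apply/eqP => ki0; have := norm_frame_vec k i; rewrite ki0 dot80l => /eqP; rewrite eq_sym pnatr_eq0.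
Qed.

Lemma coordinate_frame_set k : coordinate_frame (frame_set k).
Proof.
exists (frame_vec k); split; first exact: frame_vec_neq0.
split; first by move=> i j /negbTE ij; rewrite orthogonal_frame_vec ij.
by split=> // i j; rewrite !norm_frame_vec.
Qed.

Lemma frame_set_disjoint k k' x : k != k' -> frame_set k x -> frame_set k' x -> False.
Proof.
move=> kk' [i ki] [j k'j].
have same_or_opp : frame_vec k i = frame_vec k' j \/ frame_vec k i = - frame_vec k' j.
  case: ki k'j => -> [] e; [left | right | right | left] => //.
    by rewrite -e opprK.
  exact: oppr_inj.
have /all_iotaP/(_ k)/all_iotaP/(_ k')/orP[/eqP/val_inj kk'_eq|] := frame_roots_disjoint.
  by rewrite kk'_eq eqxx in kk'.
move=> /all_iotaP/(_ i)/all_iotaP/(_ j)/andP[/eqP same_neq /eqP opp_neq].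
by case: same_or_opp; rewrite /frame_vec -?halfvN => /halfv_inj;
  rewrite ?size_map !size_frame_root => /(_ erefl erefl).
Qed.

Lemma is_frame_root_frame s : is_frame_root s -> exists k, frame_set k (halfv R s).
Proof.
case/hasP => k; rewrite mem_iota => /andP[_ lt_k] /hasP[i].
rewrite mem_iota => /andP[_ lt_i] s_ki; exists (Ordinal lt_k), (Ordinal lt_i).
by case/orP: s_ki => /eqP ->; [left | right; rewrite halfvN].
Qed.

Lemma E8_norm_ge2 x : E8 x -> x != 0 -> 2 <= dot8 x x.
Proof.
move=> Ex x0; have [//|lt_x2] := lerP 2 (dot8 x x).
have [s s_small x_s] := E8_small Ex (ltW lt_x2).
have E8_s : E8_doubled s by rewrite -(E8_halfvP R) -x_s.
have s0 : s != nseq 8 0 by apply: contra_neq x0 => s0; rewrite x_s s0 halfv_nseq0.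
have /allP/(_ s s_small) := small_doubled_norm_ge8; rewrite E8_s s0 -(ler_int R) /=.
by move: lt_x2; rewrite x_s dot8_halfv; lra.
Qed.

Lemma E8_norm2_frame x : E8 x -> dot8 x x = 2 -> exists k, frame_set k x.
Proof.
move=> Ex x2; have [s s_small x_s] : exists2 s, s \in small_doubled & x = halfv R s.
  by apply: E8_small; rewrite ?x2.
have E8_s : E8_doubled s by rewrite -(E8_halfvP R) -x_s.
have dot_s : dotz s s == 8.
  by apply/eqP/(@intr_inj R); move: x2; rewrite x_s dot8_halfv; lra.
have /allP/(_ s) := small_doubled_norm8_roots; rewrite mem_filter E8_s dot_s s_small.
by rewrite x_s => /(_ isT)/is_frame_root_frame.
Qed.

Lemma E8_minimalP x : E8_minimal x <-> E8 x /\ dot8 x x = 2.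
Proof.
split=> [[Ex [x0 x_min]]|[Ex x2]].
  split=> //; apply/eqP; rewrite eq_le E8_norm_ge2 // andbT.
  rewrite -(norm_frame_vec ord0 ord0).
  by apply: x_min; [apply: E8_frame_vec | apply: frame_vec_neq0].
split=> //; split=> [|y Ey y0]; last by rewrite x2 E8_norm_ge2.
by apply: contra_eq_neq x2 => ->; rewrite dot80l eq_sym pnatr_eq0.
Qed.

Lemma E8_minimal_frames x : E8_minimal x <-> exists k, frame_set k x.
Proof.
rewrite E8_minimalP; split=> [[Ex x2]|[k [i [->|->]]]]; first exact: E8_norm2_frame.
  by rewrite norm_frame_vec; split=> //; apply: E8_frame_vec.
by rewrite dot8Nl dot8Nr opprK norm_frame_vec; split=> //; apply/E8N/E8_frame_vec.
Qed.

Lemma similar_to_Z8_frame_lattice k : similar_to_Z8 (frame_lattice k).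
Proof. by apply: similar_to_Z8_frame; [rewrite ltr0n | apply: orthogonal_frame_vec]. Qed.

Lemma congruent_frame_lattice k k' : congruent (frame_lattice k) (frame_lattice k').
Proof. by apply: congruent_frame_lattices; rewrite ?ltr0n //; apply: orthogonal_frame_vec. Qed.

Lemma E8_frame_lattices x : E8 x <-> forall k, frame_lattice k x.
Proof.
have latticeP k := lattice_of_frameP (ltr0Sn R 1) (orthogonal_frame_vec k).
rewrite E8_dual; split=> [x_int k|x_lat r Er r2].
  by apply/(latticeP k x) => i; apply: x_int; [apply: E8_frame_vec | apply: norm_frame_vec].
have [k [i [->|->]]] := E8_norm2_frame Er r2; have /latticeP x_k := x_lat k.
  exact: x_k.
by rewrite dot8Nr rpredN.
Qed.

End RootFrames.

Theorem mainTheorem7 (R : realType) :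
  (exists F : 'I_15 -> (vec8 R -> Prop),
      (forall k, coordinate_frame (F k)) /\
      (forall k k' x, k != k' -> F k x -> F k' x -> False) /\
      (forall x, E8_minimal x <-> exists k, F k x))
  /\
  (exists L : 'I_15 -> (vec8 R -> Prop),
      (forall k, similar_to_Z8 (L k)) /\
      (forall k k', congruent (L k) (L k')) /\
      (forall x, E8 x <-> forall k, L k x)).
Proof.
split.
  exists (@frame_set R); split; first exact: coordinate_frame_set.
  by split; [exact: frame_set_disjoint | exact: E8_minimal_frames].
exists (@frame_lattice R); split; first exact: similar_to_Z8_frame_lattice.
by split; [exact: congruent_frame_lattice | exact: E8_frame_lattices].
Qed.
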